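(* For every $E>0$ there exist even, non-quadratic $V_1,V_2\in\mathcal{UM}$ with $\deg(V_1,0)=\deg(V_2,0)=2$ such that $a(\theta)=b_E(\theta)$ for every $\theta\in(0,E)$. Moreover, $V_1,V_2$ can be chosen so that in addition $\sqrt{V_2''(0)/V_1''(0)}$ is irrational.
   Context: $\mathcal{UM}$: real-analytic $V:\mathbb R\to\mathbb R_{\ge0}$ with $V(0)=0$, $yV'(y)>0$ for $y\neq0$, $V(y)\to\infty$ as $y\to\pm\infty$; $\deg(V,0)$ is the least $m$ with $V^{(m)}(0)\ne0$; $V^{-1}$ is the inverse of $V|_{[0,\infty)}$. $a(\theta)=\int_0^{V_1^{-1}(\theta)}\frac{dy}{\sqrt2\sqrt{\theta-V_1(y)}}$ for $\theta>0$ and $b_E(\theta)=\int_0^{V_2^{-1}(E-\theta)}\frac{dy}{\sqrt2\sqrt{E-\theta-V_2(y)}}$ for $0\le\theta<E$. *)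

From Stdlib Require Import Reals Lra ClassicalEpsilon QArith.
From Coquelicot Require Import Coquelicot.
Open Scope R_scope.

Definition real_analytic (V : R -> R) : Prop :=
  forall x0 : R, exists (r : posreal) (c : nat -> R),
    forall x : R, Rabs (x - x0) < r -> is_pseries c (x - x0) (V x).

Definition UM (V : R -> R) : Prop :=
  real_analytic V /\
  (forall y, 0 <= V y) /\
  V 0 = 0 /\
  (forall y, y <> 0 -> y * Derive V y > 0) /\
  filterlim V (Rbar_locally p_infty) (Rbar_locally p_infty) /\
  filterlim V (Rbar_locally m_infty) (Rbar_locally p_infty).

Definition deg_at0 (V : R -> R) (m : nat) : Prop :=
  Derive_n V m 0 <> 0 /\ (forall k : nat, (k < m)%nat -> Derive_n V k 0 = 0).

Definition even_fun (V : R -> R) : Prop := forall y, V (- y) = V y.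

Definition quadratic (V : R -> R) : Prop := exists c : R, forall y, V y = c * y ^ 2.

Definition irrational (x : R) : Prop := ~ exists q : Q, Q2R q = x.

Definition Vinv (V : R -> R) (t : R) : R :=
  epsilon (inhabits 0) (fun y => 0 <= y /\ V y = t).

Definition is_a (V1 : R -> R) (theta l : R) : Prop :=
  is_RInt_gen (fun y => 1 / (sqrt 2 * sqrt (theta - V1 y)))
    (at_point 0) (at_left (Vinv V1 theta)) l.

Definition is_b (V2 : R -> R) (E theta l : R) : Prop :=
  is_RInt_gen (fun y => 1 / (sqrt 2 * sqrt (E - theta - V2 y)))
    (at_point 0) (at_left (Vinv V2 (E - theta))) l.

From Stdlib Require Import Reals QArith Qreals ZArith Lra Lia ClassicalEpsilon.
From Coquelicot Require Import Coquelicot.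
Open Scope R_scope.

(* The potentials are [V = W^2], where [W] is the inverse of the odd quintic
   [X u = al u + be u^3 / 3 + u^5 / 5], increasing when [be^2 < 4 al]. [W] is real analytic
   because a polynomial with nonzero linear term has a convergent compositional inverse
   (majorant method). The substitution [y = X (sqrt th sin phi)] turns the integral defining [a]
   into [(1 / sqrt 2) * int_0^(pi/2) X'(sqrt th sin phi) dphi
   = pi / (2 sqrt 2) * (al + be th / 2 + 3 th^2 / 8)], a quadratic polynomial in [th].
   So [a] for [V al1 0] equals [b_E] for [V al2 be2] once [be2 = -3E/2] and
   [al2 = al1 + 3E^2/8]; as [V''(0) = 2 / al^2], taking [al1 = 3 sqrt 2 E^2 / 8] makes
   [sqrt (V2''(0) / V1''(0)) = al1 / al2 = 2 - sqrt 2]. *)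

(** * Cauchy powers and majorant series *)

(** [PS_pow k b] is the Cauchy power [b^(k+1)], not [b^k]. *)
Fixpoint PS_pow (k : nat) (b : nat -> R) : nat -> R :=
  match k with O => b | S k => PS_mult b (PS_pow k b) end.

Lemma PS_pow_ext_le k b b' n :
  (forall i, (i <= n)%nat -> b i = b' i) -> PS_pow k b n = PS_pow k b' n.
Proof.
  revert b b' n; induction k as [|k IH]; intros b b' n Hbb'; simpl; [now apply Hbb'|].
  unfold PS_mult; apply sum_eq; intros i Hi.
  rewrite (Hbb' i Hi); f_equal; apply IH; intros j Hj; apply Hbb'; lia.
Qed.

Lemma PS_pow_0 k b : b O = 0 -> PS_pow k b O = 0.
Proof.
  revert b; induction k as [|k IH]; intros b Hb0; simpl; [easy|].
  unfold PS_mult; simpl; rewrite Hb0; ring.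
Qed.

Lemma PS_pow_succ_1 k b : b O = 0 -> PS_pow (S k) b 1 = 0.
Proof. intros Hb0; simpl; unfold PS_mult; simpl; rewrite Hb0, PS_pow_0 by easy; ring. Qed.

Lemma PS_pow_succ_lt k b b' n : b O = 0 -> b' O = 0 ->
  (forall i, (i < n)%nat -> b i = b' i) -> PS_pow (S k) b n = PS_pow (S k) b' n.
Proof.
  intros Hb0 Hb'0 Hbb'; simpl; unfold PS_mult; apply sum_eq; intros i Hi.
  destruct (Nat.eq_dec i O) as [->|Hi0]; [rewrite Hb0, Hb'0; ring|].
  destruct (Nat.eq_dec i n) as [->|Hin].
  - rewrite Nat.sub_diag, !PS_pow_0 by easy; ring.
  - rewrite (Hbb' i) by lia; f_equal.
    apply PS_pow_ext_le; intros j Hj; apply Hbb'; lia.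
Qed.

Lemma PS_pow_nonneg k b n : (forall i, 0 <= b i) -> 0 <= PS_pow k b n.
Proof.
  revert b n; induction k as [|k IH]; intros b n Hb; simpl; [easy|].
  unfold PS_mult; apply cond_pos_sum; intros i; apply Rmult_le_pos; auto.
Qed.

Lemma Rabs_PS_pow_le k b n : Rabs (PS_pow k b n) <= PS_pow k (fun i => Rabs (b i)) n.
Proof.
  revert b n; induction k as [|k IH]; intros b n; simpl; [lra|].
  unfold PS_mult; eapply Rle_trans; [apply sum_f_R0_triangle|].
  apply sum_Rle; intros i _; rewrite Rabs_mult.
  apply Rmult_le_compat_l; [apply Rabs_pos | apply IH].
Qed.

Lemma is_pseries_PS_pow k b z :
  (forall j, Rbar_lt (Rabs z) (CV_radius (PS_pow j b))) ->
  is_pseries (PS_pow k b) z (PSeries b z ^ S k).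
Proof.
  intros Hrad.
  assert (Hb : is_pseries b z (PSeries b z))
    by exact (PSeries_correct _ _ (CV_radius_inside _ _ (Hrad O))).
  induction k as [|k IH]; [now rewrite pow_1|].
  change (PSeries b z ^ S (S k)) with (PSeries b z * PSeries b z ^ S k).
  apply is_pseries_mult; auto; apply (Hrad O).
Qed.

Definition psum (b : nat -> R) (r : R) (N : nat) : R :=
  sum_f_R0 (fun n => b n * r ^ n) N.

Lemma psum_nonneg b r N : (forall i, 0 <= b i) -> 0 <= r -> 0 <= psum b r N.
Proof.
  intros Hb Hr; apply cond_pos_sum; intros n; apply Rmult_le_pos; auto; now apply pow_le.
Qed.

Lemma psum_plus f g r N : psum (fun n => f n + g n) r N = psum f r N + psum g r N.
Proof. unfold psum; rewrite <- plus_sum; apply sum_eq; intros; ring. Qed.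

Lemma psum_scal x f r N : psum (fun n => x * f n) r N = x * psum f r N.
Proof. unfold psum; rewrite scal_sum; apply sum_eq; intros; ring. Qed.

Lemma psum_sum (g : nat -> nat -> R) m r N :
  psum (fun n => sum_f_R0 (fun k => g k n) m) r N = sum_f_R0 (fun k => psum (g k) r N) m.
Proof.
  induction m as [|m IH]; [easy|].
  rewrite tech5, <- IH, <- psum_plus; apply sum_eq; intros; now rewrite tech5.
Qed.

Lemma psum_PS_mult_le b c r N : (forall i, 0 <= b i) -> (forall i, 0 <= c i) -> 0 <= r ->
  psum (PS_mult b c) r N <= psum b r N * psum c r N.
Proof.
  intros Hb Hc Hr; destruct N as [|N]; [unfold psum, PS_mult; simpl; lra|].
  unfold psum; rewrite cauchy_finite by lia.
  match goal with |- _ <= ?A + ?B => assert (HB : 0 <= B) end.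
  { apply cond_pos_sum; intros k; apply cond_pos_sum; intros l.
    apply Rmult_le_pos; apply Rmult_le_pos; auto; now apply pow_le. }
  match goal with |- _ <= ?A + _ =>
    assert (HA : sum_f_R0 (fun n => PS_mult b c n * r ^ n) (S N) = A) end.
  { apply sum_eq; intros k _; unfold PS_mult; rewrite Rmult_comm, scal_sum.
    apply sum_eq; intros p Hp.
    replace (r ^ k) with (r ^ p * r ^ (k - p)) by (rewrite <- pow_add; f_equal; lia).
    ring. }
  lra.
Qed.

Lemma psum_PS_pow_le k b r N : (forall i, 0 <= b i) -> 0 <= r ->
  psum (PS_pow k b) r N <= psum b r N ^ S k.
Proof.
  revert b; induction k as [|k IH]; intros b Hb Hr; simpl; [lra|].
  eapply Rle_trans; [apply psum_PS_mult_le; auto; intros; now apply PS_pow_nonneg|].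
  apply Rmult_le_compat_l; [now apply psum_nonneg | now apply IH].
Qed.

Definition trunc (N : nat) (b : nat -> R) : nat -> R :=
  fun i => if (i <=? N)%nat then b i else 0.

Lemma trunc_nonneg N b i : (forall j, 0 <= b j) -> 0 <= trunc N b i.
Proof. intros Hb; unfold trunc; destruct (i <=? N)%nat; [easy | lra]. Qed.

Lemma psum_trunc b r N : psum (trunc N b) r (S N) = psum b r N.
Proof.
  unfold psum; rewrite tech5; unfold trunc at 2.
  rewrite (proj2 (Nat.leb_gt (S N) N)) by lia; rewrite Rmult_0_l, Rplus_0_r.
  apply sum_eq; intros i Hi; unfold trunc; now rewrite (proj2 (Nat.leb_le i N)) by lia.
Qed.

Lemma psum_PS_pow_trunc k b r N : b O = 0 ->
  psum (PS_pow (S k) b) r (S N) = psum (PS_pow (S k) (trunc N b)) r (S N).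
Proof.
  intros Hb0; unfold psum; apply sum_eq; intros n Hn; f_equal.
  apply PS_pow_succ_lt; auto; intros i Hi; unfold trunc.
  now rewrite (proj2 (Nat.leb_le i N)) by lia.
Qed.

Lemma CV_radius_ge_of_psum_bound a r M : 0 <= r ->
  (forall N, psum (fun i => Rabs (a i)) r N <= M) -> Rbar_le r (CV_radius a).
Proof.
  intros Hr HM; apply (proj1 (Lub_Rbar_correct (CV_disk a))).
  assert (Habs : forall n, Rabs (a n * r ^ n) = Rabs (a n) * r ^ n)
    by (intros n; rewrite Rabs_mult, (Rabs_pos_eq (r ^ n)); [easy | now apply pow_le]).
  apply ex_series_Reals_1, growing_cv.
  - intros n; simpl; rewrite !Habs.
    pose proof (Rmult_le_pos _ _ (Rabs_pos (a (S n))) (pow_le r (S n) Hr)); lra.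
  - exists M; intros x [N ->]; eapply Rle_trans; [|apply (HM N)].
    right; apply sum_eq; intros; apply Habs.
Qed.

Definition e1 (n : nat) : R := if (n =? 1)%nat then 1 else 0.

Lemma is_series_e1 z : is_series (fun n => e1 n * z ^ n) z.
Proof.
  apply is_series_Reals; intros eps Heps; exists 1%nat; intros n Hn.
  replace (sum_f_R0 (fun n => e1 n * z ^ n) n) with z
    by (destruct n as [|n]; [lia|]; clear Hn; induction n as [|n IH];
        [simpl; unfold e1; simpl; ring | rewrite tech5, <- IH; unfold e1; simpl; ring]).
  unfold Rdist; now rewrite Rminus_diag, Rabs_R0.
Qed.

Definition e0 (n : nat) : R := if (n =? 0)%nat then 1 else 0.

Lemma is_series_e0 z : is_series (fun n => e0 n * z ^ n) 1.
Proof.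
  apply is_series_Reals; intros eps Heps; exists O; intros n _.
  replace (sum_f_R0 (fun n => e0 n * z ^ n) n) with 1
    by (induction n as [|n IH]; [unfold e0; simpl; ring | rewrite tech5, <- IH; unfold e0; simpl; ring]).
  unfold Rdist; now rewrite Rminus_diag, Rabs_R0.
Qed.

Lemma psum_e1 r N : psum e1 r (S N) = r.
Proof.
  unfold psum; induction N as [|N IH]; [unfold e1; simpl; ring|].
  rewrite tech5, IH; unfold e1; simpl; ring.
Qed.

Lemma is_series_sum_f_R0 (f : nat -> nat -> R) (l : nat -> R) m :
  (forall k, is_series (f k) (l k)) ->
  is_series (fun n => sum_f_R0 (fun k => f k n) m) (sum_f_R0 l m).
Proof.
  intros Hf; induction m as [|m IH]; [apply Hf|].
  apply (is_series_plus _ _ _ _ IH (Hf (S m))).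
Qed.

(** * Local inversion of polynomials *)

Section PolynomialInverse.

Variables (c : R) (d : nat -> R) (m : nat).
Hypothesis c_neq0 : c <> 0.

(* The polynomial is [c w + sum_(k <= m) d k w^(k+2)]; a series [b] without constant
   term is inverse to it iff [b = inv_step b]. *)
Definition inv_step (b : nat -> R) (n : nat) : R :=
  match n with
  | O => 0
  | 1%nat => / c
  | _ => - / c * sum_f_R0 (fun k => d k * PS_pow (S k) b n) m
  end.

(* The n-th coefficient is stable after n+1 iterations since [inv_step b n] only depends on
   the coefficients of [b] below n. *)
Definition inv_coef (n : nat) : R := Nat.iter (S n) inv_step (fun _ => 0) n.

Lemma inv_step_lt b b' n : b O = 0 -> b' O = 0 ->
  (forall i, (i < n)%nat -> b i = b' i) -> inv_step b n = inv_step b' n.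
Proof.
  intros Hb0 Hb'0 Hbb'; destruct n as [|[|n]]; try easy; cbn [inv_step].
  f_equal; apply sum_eq; intros k _; f_equal; now apply PS_pow_succ_lt.
Qed.

Lemma iter_inv_step_0 j : Nat.iter j inv_step (fun _ => 0) O = 0.
Proof. now destruct j. Qed.

Lemma iter_inv_step_stable n j : (n < j)%nat -> Nat.iter j inv_step (fun _ => 0) n = inv_coef n.
Proof.
  revert j; induction n as [n IH] using (well_founded_induction Wf_nat.lt_wf); intros j Hj.
  destruct j as [|j]; [lia|]; unfold inv_coef; simpl.
  apply inv_step_lt; try apply iter_inv_step_0.
  intros i Hi; now rewrite (IH i Hi j), (IH i Hi n) by lia.
Qed.

Lemma inv_coef_fix n : inv_coef n = inv_step inv_coef n.
Proof.
  unfold inv_coef at 1; simpl; apply inv_step_lt; [apply iter_inv_step_0 | easy |].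
  intros i Hi; now apply iter_inv_step_stable.
Qed.

Lemma inv_coef_0 : inv_coef O = 0.
Proof. easy. Qed.

Lemma inv_coef_1 : inv_coef 1 = / c.
Proof. easy. Qed.

Lemma inv_coef_spec n :
  c * inv_coef n + sum_f_R0 (fun k => d k * PS_pow (S k) inv_coef n) m = e1 n.
Proof.
  assert (Hzero : forall n, (forall k, PS_pow (S k) inv_coef n = 0) ->
            sum_f_R0 (fun k => d k * PS_pow (S k) inv_coef n) m = 0).
  { intros p Hp; rewrite (sum_eq _ (fun _ => 0)), sum_cte by (intros k _; rewrite Hp; ring).
    ring. }
  destruct n as [|[|n]].
  - rewrite Hzero by (intros; apply PS_pow_0, inv_coef_0).
    rewrite inv_coef_0; unfold e1; simpl; ring.
  - rewrite Hzero by (intros; apply PS_pow_succ_1, inv_coef_0).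
    rewrite inv_coef_1; unfold e1; simpl; field; easy.
  - rewrite inv_coef_fix at 1; cbn [inv_step e1 Nat.eqb]; field; easy.
Qed.

Let abs_coef (n : nat) : R := Rabs (inv_coef n).
Let kappa : R := Rabs (/ c).
Let D : R := sum_f_R0 (fun k => Rabs (d k)) m.

Lemma abs_coef_le n :
  abs_coef n <= kappa * e1 n + kappa * sum_f_R0 (fun k => Rabs (d k) * PS_pow (S k) abs_coef n) m.
Proof.
  assert (HR : 0 <= kappa * sum_f_R0 (fun k => Rabs (d k) * PS_pow (S k) abs_coef n) m).
  { apply Rmult_le_pos; [apply Rabs_pos|]; apply cond_pos_sum; intros k.
    apply Rmult_le_pos; [apply Rabs_pos | apply PS_pow_nonneg; intros; apply Rabs_pos]. }
  unfold abs_coef at 1; destruct n as [|[|n]].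
  - rewrite inv_coef_0, Rabs_R0; cbn [e1 Nat.eqb]; lra.
  - rewrite inv_coef_1; cbn [e1 Nat.eqb]; fold kappa; lra.
  - rewrite inv_coef_fix; cbn [inv_step e1 Nat.eqb].
    rewrite Rmult_0_r, Rplus_0_l, Rabs_mult, Rabs_Ropp.
    apply Rmult_le_compat_l; [apply Rabs_pos|].
    eapply Rle_trans; [apply sum_f_R0_triangle|]; apply sum_Rle; intros k _.
    rewrite Rabs_mult; apply Rmult_le_compat_l; [apply Rabs_pos | apply Rabs_PS_pow_le].
Qed.

(* Majorant method: by [abs_coef_le], a bound [s] on the partial sums up to degree N yields,
   after truncating [abs_coef] at N, the bound [kappa r + kappa D s^2 <= s] one degree further. *)
Lemma psum_abs_coef_le r s : 0 <= r -> 0 <= s <= 1 -> kappa * r + kappa * (D * s ^ 2) <= s ->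
  forall N, psum abs_coef r N <= s.
Proof.
  intros Hr Hs Hrs N.
  assert (Hnn : forall i, 0 <= abs_coef i) by (intros; apply Rabs_pos).
  assert (H0 : abs_coef O = 0) by (unfold abs_coef; rewrite inv_coef_0; apply Rabs_R0).
  induction N as [|N IH]; [unfold psum; simpl; rewrite H0; lra|].
  assert (Hsum : psum abs_coef r N <= s /\ 0 <= psum abs_coef r N)
    by (split; [easy | now apply psum_nonneg]).
  assert (Hpow : forall k, psum (PS_pow (S k) abs_coef) r (S N) <= s ^ 2).
  { intros k; rewrite psum_PS_pow_trunc by easy.
    eapply Rle_trans; [apply psum_PS_pow_le; auto; intros; now apply trunc_nonneg|].
    rewrite psum_trunc.
    replace (psum abs_coef r N ^ S (S k)) with (psum abs_coef r N ^ 2 * psum abs_coef r N ^ k)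
      by (rewrite <- pow_add; f_equal; lia).
    assert (psum abs_coef r N ^ k <= 1) by (rewrite <- (pow1 k); apply pow_incr; lra).
    assert (psum abs_coef r N ^ 2 <= s ^ 2) by (apply pow_incr; lra).
    pose proof (pow_le _ k (proj2 Hsum)); pose proof (pow2_ge_0 (psum abs_coef r N)); nra. }
  eapply Rle_trans.
  { apply sum_Rle; intros n _; apply Rmult_le_compat_r; [now apply pow_le | apply abs_coef_le]. }
  fold (psum (fun n => kappa * e1 n
    + kappa * sum_f_R0 (fun k => Rabs (d k) * PS_pow (S k) abs_coef n) m) r (S N)).
  rewrite psum_plus, !psum_scal, psum_e1, psum_sum.
  eapply Rle_trans; [|exact Hrs]; apply Rplus_le_compat_l, Rmult_le_compat_l; [apply Rabs_pos|].
  unfold D; rewrite (Rmult_comm _ (s ^ 2)), scal_sum; apply sum_Rle; intros k _.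
  rewrite psum_scal; apply Rmult_le_compat_l; [apply Rabs_pos | apply Hpow].
Qed.

Lemma polynomial_inverse_series : exists r (a : nat -> R),
  0 < r /\ a O = 0 /\ a 1%nat = / c /\
  (forall k, Rbar_le r (CV_radius (PS_pow k a))) /\
  forall z, Rabs z < r ->
    c * PSeries a z + sum_f_R0 (fun k => d k * PSeries a z ^ S (S k)) m = z.
Proof.
  assert (Hk : 0 < kappa) by (apply Rabs_pos_lt, Rinv_neq_0_compat, c_neq0).
  assert (HD : 0 <= D) by (apply cond_pos_sum; intros; apply Rabs_pos).
  set (s := / (2 * (kappa * D + 1))); set (r := s / (2 * kappa)).
  assert (Hs : 0 < s) by (apply Rinv_0_lt_compat; nra).
  assert (Hs1 : s <= 1) by (unfold s; rewrite <- Rinv_1; apply Rinv_le_contravar; nra).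
  assert (Hr : 0 < r) by (unfold r; apply Rdiv_lt_0_compat; lra).
  assert (HkDs : kappa * D * s <= / 2)
    by (unfold s; apply (Rmult_le_reg_r (2 * (kappa * D + 1))); [nra|];
        field_simplify; nra).
  assert (Hrs : kappa * r + kappa * (D * s ^ 2) <= s)
    by (unfold r; field_simplify; [nra | lra]).
  assert (Hdisk : forall k, Rbar_le r (CV_radius (PS_pow k inv_coef))).
  { intros k; apply CV_radius_ge_of_psum_bound with (s ^ S k); [lra|]; intros N.
    eapply Rle_trans.
    { apply sum_Rle; intros n _; apply Rmult_le_compat_r; [apply pow_le; lra|].
      apply Rabs_PS_pow_le. }
    eapply Rle_trans; [apply psum_PS_pow_le; [intros; apply Rabs_pos | lra]|].
    apply pow_incr; split; [apply psum_nonneg; [intros; apply Rabs_pos | lra]|].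
    apply psum_abs_coef_le; lra. }
  exists r, inv_coef; repeat split; auto.
  intros z Hz.
  assert (Hrad : forall k, Rbar_lt (Rabs z) (CV_radius (PS_pow k inv_coef)))
    by (intros k; exact (Rbar_lt_le_trans (Rabs z) r _ Hz (Hdisk k))).
  assert (Hpow := fun k => proj1 (is_pseries_R _ _ _) (is_pseries_PS_pow k _ z Hrad)).
  set (w := PSeries inv_coef z) in *.
  assert (Hsum : is_series
    (fun n => c * (inv_coef n * z ^ n) + sum_f_R0 (fun k => d k * (PS_pow (S k) inv_coef n * z ^ n)) m)
    (c * w ^ 1 + sum_f_R0 (fun k => d k * w ^ S (S k)) m)).
  { apply (is_series_plus _ _ _ _ (is_series_scal c _ _ (Hpow O))).
    apply is_series_sum_f_R0; intros k; apply (is_series_scal (d k) _ _ (Hpow (S k))). }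
  rewrite pow_1 in Hsum; apply is_series_unique in Hsum; rewrite <- Hsum.
  apply is_series_unique, (is_series_ext (fun n => e1 n * z ^ n)); [intros n | apply is_series_e1].
  rewrite <- (inv_coef_spec n), Rmult_plus_distr_r, (Rmult_comm (sum_f_R0 _ _)), scal_sum.
  f_equal; [ring|]; apply sum_eq; intros; ring.
Qed.

End PolynomialInverse.

(** * Improper integrals and the arcsine *)

Lemma locally_of_Rabs_lt (x r : R) (P : R -> Prop) :
  0 < r -> (forall t, Rabs (t - x) < r -> P t) -> locally x P.
Proof. intros Hr HP; exists (mkposreal r Hr); exact HP. Qed.

Lemma is_RInt_gen_at_left_of_derive (f F : R -> R) (a x0 b L : R) : a < x0 < b ->
  (forall x, a < x < b -> is_derive F x (f x)) ->
  (forall x, a < x < b -> continuous f x) ->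
  filterlim F (at_left b) (locally L) ->
  is_RInt_gen f (at_point x0) (at_left b) (L - F x0).
Proof.
  intros Hx0 HF Hf HL.
  assert (Hprod : forall P : R -> Prop, (forall x, a < x < b -> P x) ->
    filter_prod (at_point x0) (at_left b)
      (fun uv => forall x, Rmin (fst uv) (snd uv) <= x <= Rmax (fst uv) (snd uv) -> P x)).
  { intros P HP; apply Filter_prod with (fun u => u = x0) (fun v => x0 < v < b); [easy | |].
    - apply locally_of_Rabs_lt with (b - x0); [lra|]; intros v Hv Hvb.
      apply Rabs_def2 in Hv; lra.
    - intros u v -> Hv x Hx; simpl in Hx; rewrite Rmin_left, Rmax_right in Hx by lra.
      apply HP; lra. }
  assert (HDF : forall x, a < x < b -> Derive F x = f x) by (intros; now apply is_derive_unique, HF).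
  apply is_RInt_gen_ext with (Derive F).
  { eapply filter_imp; [|apply (Hprod _ HDF)]; intros uv Huv x Hx; apply Huv; split; apply Rlt_le, Hx. }
  apply is_RInt_gen_Derive.
  - apply Hprod; intros x Hx; exists (f x); now apply HF.
  - apply Hprod; intros x Hx; apply continuous_ext_loc with f; [|now apply Hf].
    apply locally_of_Rabs_lt with (Rmin (x - a) (b - x)); [apply Rmin_pos; lra|].
    intros t Ht; apply Rabs_def2 in Ht; pose proof (Rmin_l (x - a) (b - x));
      pose proof (Rmin_r (x - a) (b - x)); symmetry; apply HDF; lra.
  - intros P HP; exact (locally_singleton _ _ HP).
  - exact HL.
Qed.

Lemma continuous_inv_sqrt_diff (g : R -> R) (th x : R) : continuous g x -> 0 < th - g x ->
  continuous (fun y => 1 / (sqrt 2 * sqrt (th - g y))) x.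
Proof.
  intros Hg Hpos.
  apply (continuous_mult (fun _ => 1)); [apply continuous_const|].
  apply continuous_Rinv_comp.
  - apply (continuous_mult (fun _ => sqrt 2)); [apply continuous_const|].
    apply continuous_sqrt_comp, (continuous_minus (fun _ => th)); [apply continuous_const | easy].
  - apply Rmult_integral_contrapositive; split; [apply sqrt2_neq_0 | apply Rgt_not_eq, sqrt_lt_R0, Hpos].
Qed.

Lemma is_derive_asin t : -1 < t < 1 -> is_derive asin t (/ sqrt (1 - t ^ 2)).
Proof.
  intros Ht; apply is_derive_Reals.
  pose proof (derive_pt_asin t Ht) as E; unfold derive_pt in E.
  destruct (derivable_pt_asin t Ht) as [l Hl]; simpl in E; subst l.
  replace (/ sqrt (1 - t ^ 2)) with (1 / sqrt (1 - t²)); [exact Hl|].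
  unfold Rdiv, Rsqr; rewrite Rmult_1_l; do 3 f_equal; ring.
Qed.

Lemma asin_at_left_1 : filterlim asin (at_left 1) (locally (PI / 2)).
Proof.
  intros P [eps Heps]; pose proof PI_RGT_0.
  set (e := Rmin (eps / 2) (PI / 2)).
  assert (He : 0 < e) by (apply Rmin_pos; pose proof (cond_pos eps); lra).
  assert (He2 : e <= PI / 2) by apply Rmin_r.
  assert (He3 : e <= eps / 2) by apply Rmin_l.
  clearbody e.
  assert (Hs : sin (PI / 2 - e) < 1) by (rewrite <- sin_PI2; apply sin_increasing_1; lra).
  apply locally_of_Rabs_lt with (1 - sin (PI / 2 - e)); [lra|]; intros u Hu Hu1; apply Heps.
  apply Rabs_def2 in Hu; pose proof (asin_bound u) as Hb.
  assert (Hs0 : 0 <= sin (PI / 2 - e)) by (apply sin_ge_0; lra).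
  assert (Ha : PI / 2 - e < asin u).
  { destruct (Rlt_le_dec (PI / 2 - e) (asin u)) as [|Hle]; [easy|].
    pose proof (sin_incr_1 (asin u) (PI / 2 - e) (proj1 Hb) (proj2 Hb) ltac:(lra) ltac:(lra) Hle).
    rewrite sin_asin in * by lra; lra. }
  destruct Hb as [_ Hb]; change (Rabs (asin u - PI / 2) < eps).
  rewrite Rabs_left1 by lra; pose proof (cond_pos eps); lra.
Qed.

Lemma continuity_pt_of_is_derive (f : R -> R) x l : is_derive f x l -> continuity_pt f x.
Proof. intros Hf; apply continuity_pt_filterlim, (ex_derive_continuous f); now exists l. Qed.

(** * The potentials [V = (X^-1)^2] *)

Section Quintic.

Variables al be : R.
Hypothesis al_pos : 0 < al.
Hypothesis disc_neg : be ^ 2 < 4 * al.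

Definition X (u : R) : R := al * u + be / 3 * u ^ 3 + u ^ 5 / 5.
Definition dX (u : R) : R := al + be * u ^ 2 + u ^ 4.

Lemma dX_pos u : 0 < dX u.
Proof.
  unfold dX; replace (al + be * u ^ 2 + u ^ 4) with ((u ^ 2 + be / 2) ^ 2 + (4 * al - be ^ 2) / 4)
    by field.
  pose proof (pow2_ge_0 (u ^ 2 + be / 2)); lra.
Qed.

Lemma is_derive_X u : is_derive X u (dX u).
Proof. unfold X, dX; auto_derive; [easy | field]. Qed.

Lemma X_lt u v : u < v -> X u < X v.
Proof.
  intros Huv; destruct (MVT_gen X u v dX) as [t [_ Ht]].
  - intros x _; apply is_derive_X.
  - intros x _; eapply continuity_pt_of_is_derive, is_derive_X.
  - pose proof (dX_pos t); nra.
Qed.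

Lemma X_lt_inv u v : X u < X v -> u < v.
Proof.
  intros H; destruct (Rtotal_order u v) as [|[->|Hvu]]; [easy | lra |].
  apply X_lt in Hvu; lra.
Qed.

Lemma X_inj u v : X u = X v -> u = v.
Proof. intros H; destruct (Rtotal_order u v) as [Huv|[|Huv]]; auto; apply X_lt in Huv; lra. Qed.

Lemma X_opp u : X (- u) = - X u.
Proof. unfold X, Rdiv; ring. Qed.

Lemma X_0 : X 0 = 0.
Proof. unfold X, Rdiv; ring. Qed.

(* The constant 4/9 works because [5 al / 9 + be u^2 / 3 + u^4 / 5] is a positive quadratic
   form in [u^2] as soon as [be^2 < 4 al]. *)
Lemma X_ge_linear u : 0 <= u -> 4 * al / 9 * u <= X u.
Proof.
  intros Hu; unfold X.
  assert (0 <= 5 * al / 9 + be / 3 * u ^ 2 + u ^ 4 / 5).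
  { replace (5 * al / 9 + be / 3 * u ^ 2 + u ^ 4 / 5)
      with ((u ^ 2 + 5 * be / 6) ^ 2 / 5 + 5 / 36 * (4 * al - be ^ 2)) by field.
    pose proof (pow2_ge_0 (u ^ 2 + 5 * be / 6)); nra. }
  nra.
Qed.

Lemma X_surj y : exists u, X u = y.
Proof.
  set (M := Rabs y / (4 * al / 9)).
  assert (HM : 0 <= M) by (apply Rdiv_le_0_compat; [apply Rabs_pos | lra]).
  assert (HXM : Rabs y <= X M)
    by (eapply Rle_trans; [|now apply X_ge_linear]; right; unfold M; field; lra).
  destruct (IVT_gen X (- M) M y) as [u [_ Hu]]; [| |now exists u].
  - intros x; eapply continuity_pt_of_is_derive, is_derive_X.
  - rewrite X_opp, Rmin_left, Rmax_right by (pose proof (Rabs_pos y); lra).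
    pose proof (Rle_abs y); pose proof (Rle_abs (- y)); rewrite Rabs_Ropp in *; lra.
Qed.

Definition W (y : R) : R := epsilon (inhabits 0) (fun u => X u = y).

Lemma X_W y : X (W y) = y.
Proof. exact (epsilon_spec (inhabits 0) (fun u => X u = y) (X_surj y)). Qed.

Lemma W_X u : W (X u) = u.
Proof. apply X_inj, X_W. Qed.

Lemma W_opp y : W (- y) = - W y.
Proof. apply X_inj; now rewrite X_opp, !X_W. Qed.

Lemma W_0 : W 0 = 0.
Proof. rewrite <- (W_X 0) at 2; now rewrite X_0. Qed.

Lemma W_lt y y' : y < y' -> W y < W y'.
Proof. intros; apply X_lt_inv; now rewrite !X_W. Qed.

Lemma W_mul_pos y : y <> 0 -> 0 < y * W y.
Proof.
  intros Hy; destruct (Rtotal_order y 0) as [Hneg|[|Hpos]]; [| easy |].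
  - pose proof (W_lt _ _ Hneg); rewrite W_0 in *; nra.
  - pose proof (W_lt _ _ Hpos); rewrite W_0 in *; nra.
Qed.

Definition X_taylor_coef (u0 : R) (k : nat) : R :=
  match k with
  | O => be * u0 + 2 * u0 ^ 3
  | 1%nat => be / 3 + 2 * u0 ^ 2
  | 2%nat => u0
  | _ => / 5
  end.

Lemma X_taylor u0 w :
  X (u0 + w) = X u0 + (dX u0 * w + sum_f_R0 (fun k => X_taylor_coef u0 k * w ^ S (S k)) 3).
Proof. unfold X, dX; simpl; field. Qed.

Lemma W_local_series y0 : exists r (a : nat -> R),
  0 < r /\ a 1%nat = / dX (W y0) /\ (forall k, Rbar_le r (CV_radius (PS_pow k a))) /\
  forall z, Rabs z < r -> W (y0 + z) = W y0 + PSeries a z.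
Proof.
  destruct (polynomial_inverse_series (dX (W y0)) (X_taylor_coef (W y0)) 3
              (Rgt_not_eq _ _ (dX_pos (W y0)))) as [r [a [Hr [_ [Ha1 [Hrad Ha]]]]]].
  exists r, a; repeat split; auto; intros z Hz.
  apply X_inj; rewrite X_W, X_taylor, Ha, X_W by easy; easy.
Qed.

Lemma is_derive_W y : is_derive W y (/ dX (W y)).
Proof.
  destruct (W_local_series y) as [r [a [Hr [Ha1 [Hrad Ha]]]]].
  assert (H0 : Rbar_lt (Rabs 0) (CV_radius a))
    by (rewrite Rabs_R0; exact (Rbar_lt_le_trans 0 r _ Hr (Hrad O))).
  apply is_derive_ext_loc with (fun t => W y + PSeries a (t - y)).
  - exists (mkposreal r Hr); intros t Ht; rewrite <- Ha by exact Ht; f_equal; ring.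
  - pose proof (is_derive_PSeries a 0 H0) as Hd.
    rewrite PSeries_0 in Hd; unfold PS_derive in Hd; simpl (INR 1) in Hd.
    rewrite Rmult_1_l, Ha1 in Hd.
    auto_derive; replace (y + - y) with 0 by ring; [now exists (/ dX (W y)) |].
    apply is_derive_unique in Hd; now rewrite Rmult_1_l, <- Hd.
Qed.

Definition V (y : R) : R := W y ^ 2.

Lemma V_real_analytic : real_analytic V.
Proof.
  intros y0; destruct (W_local_series y0) as [r [a [Hr [_ [Hrad Ha]]]]].
  exists (mkposreal r Hr), (fun n => W y0 ^ 2 * e0 n + 2 * W y0 * a n + PS_pow 1 a n).
  intros y Hy; simpl in Hy.
  assert (Hrad' : forall k, Rbar_lt (Rabs (y - y0)) (CV_radius (PS_pow k a)))
    by (intros k; exact (Rbar_lt_le_trans (Rabs (y - y0)) r _ Hy (Hrad k))).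
  pose proof (proj1 (is_pseries_R _ _ _) (is_pseries_PS_pow 0 a _ Hrad')) as Hw.
  pose proof (proj1 (is_pseries_R _ _ _) (is_pseries_PS_pow 1 a _ Hrad')) as Hw2.
  rewrite pow_1 in Hw; set (w := PSeries a (y - y0)) in *.
  assert (HWy : W y = W y0 + w) by (unfold w; rewrite <- Ha by easy; f_equal; ring).
  replace (V y) with (W y0 ^ 2 * 1 + 2 * W y0 * w + w ^ 2) by (unfold V; rewrite HWy; ring).
  apply is_pseries_R, (is_series_ext (fun n => W y0 ^ 2 * (e0 n * (y - y0) ^ n)
    + 2 * W y0 * (a n * (y - y0) ^ n) + PS_pow 1 a n * (y - y0) ^ n)); [intros n; simpl; ring|].
  apply (is_series_plus _ _ _ _ (is_series_plus _ _ _ _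
    (is_series_scal _ _ _ (is_series_e0 _)) (is_series_scal _ _ _ Hw)) Hw2).
Qed.

Lemma is_derive_V y : is_derive V y (2 * W y / dX (W y)).
Proof.
  unfold V; replace (2 * W y / dX (W y)) with (INR 2 * / dX (W y) * W y ^ pred 2)
    by (simpl; unfold Rdiv; ring).
  apply is_derive_pow, is_derive_W.
Qed.

Lemma Derive_V y : Derive V y = 2 * W y / dX (W y).
Proof. apply is_derive_unique, is_derive_V. Qed.

Lemma Derive_n_V_2_0 : Derive_n V 2 0 = 2 / al ^ 2.
Proof.
  cbn [Derive_n]; rewrite (Derive_ext _ _ _ Derive_V); apply is_derive_unique.
  assert (HdX0 : dX (W 0) = al) by (rewrite W_0; unfold dX; ring).
  assert (Hnum : is_derive (fun y => 2 * W y) 0 (2 * / al))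
    by (rewrite <- HdX0; apply (is_derive_scal W), is_derive_W).
  assert (Hden : is_derive (fun y => dX (W y)) 0 0).
  { replace 0 with (/ dX (W 0) * (2 * be * W 0 + 4 * W 0 ^ 3)) at 2
      by (rewrite W_0; ring).
    apply (is_derive_comp dX W); [unfold dX; auto_derive; [easy | ring] | apply is_derive_W]. }
  replace (2 / al ^ 2) with ((2 * / al * dX (W 0) - 2 * W 0 * 0) / dX (W 0) ^ 2)
    by (rewrite HdX0; field; lra).
  apply (is_derive_div (fun y => 2 * W y) (fun y => dX (W y))); [easy | easy |].
  rewrite HdX0; lra.
Qed.

Lemma sqr_lt_V y u : 0 <= u -> (X u < y \/ y < X (- u)) -> u ^ 2 < V y.
Proof.
  intros Hu [Hy|Hy]; apply W_lt in Hy; rewrite W_X in Hy; unfold V; nra.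
Qed.

Lemma V_UM : UM V.
Proof.
  repeat split.
  - exact V_real_analytic.
  - intros y; apply pow2_ge_0.
  - unfold V; rewrite W_0; ring.
  - intros y Hy; rewrite Derive_V.
    replace (y * (2 * W y / dX (W y))) with (2 * (y * W y) / dX (W y))
      by (field; apply Rgt_not_eq, dX_pos).
    pose proof (W_mul_pos y Hy); pose proof (dX_pos (W y)); apply Rdiv_lt_0_compat; lra.
  - intros P [M HM]; exists (X (Rabs M + 1)); intros y Hy; apply HM.
    pose proof (sqr_lt_V y (Rabs M + 1) ltac:(pose proof (Rabs_pos M); lra) (or_introl Hy)).
    pose proof (Rle_abs M); pose proof (Rabs_pos M); nra.
  - intros P [M HM]; exists (X (- (Rabs M + 1))); intros y Hy; apply HM.
    pose proof (sqr_lt_V y (Rabs M + 1) ltac:(pose proof (Rabs_pos M); lra) (or_intror Hy)).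
    pose proof (Rle_abs M); pose proof (Rabs_pos M); nra.
Qed.

Lemma V_even : even_fun V.
Proof. intros y; unfold V; rewrite W_opp; ring. Qed.

Lemma V_deg_2 : deg_at0 V 2.
Proof.
  split.
  - rewrite Derive_n_V_2_0; pose proof (pow_lt _ 2 al_pos); apply Rgt_not_eq, Rdiv_lt_0_compat; lra.
  - intros [|[|k]] Hk; [| |lia]; cbn [Derive_n].
    + unfold V; rewrite W_0; ring.
    + rewrite Derive_V, W_0; unfold Rdiv; ring.
Qed.

(* Along the curve [y = X u], [V] equals [u^2]; three points on it rule out [c y^2]. *)
Lemma V_not_quadratic : ~ quadratic V.
Proof.
  intros [c Hc].
  assert (HVX : forall u, u ^ 2 = c * X u ^ 2) by (intros u; rewrite <- Hc; unfold V; now rewrite W_X).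
  assert (Hpos : forall u, 0 < u -> 0 < X u) by (intros u Hu; rewrite <- X_0; now apply X_lt).
  pose proof (Hpos 1 ltac:(lra)); pose proof (Hpos 2 ltac:(lra)); pose proof (Hpos 3 ltac:(lra)).
  assert (Hc0 : c <> 0) by (intros ->; specialize (HVX 1); lra).
  assert (H2 : X 2 = 2 * X 1).
  { apply Rsqr_inj; try lra; unfold Rsqr; apply (Rmult_eq_reg_l c); [|easy].
    pose proof (HVX 1); pose proof (HVX 2); nra. }
  assert (H3 : X 3 = 3 * X 1).
  { apply Rsqr_inj; try lra; unfold Rsqr; apply (Rmult_eq_reg_l c); [|easy].
    pose proof (HVX 1); pose proof (HVX 3); nra. }
  unfold X in H2, H3; lra.
Qed.

Lemma Vinv_V t : 0 <= t -> Vinv V t = X (sqrt t).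
Proof.
  intros Ht; unfold Vinv.
  assert (Hex : exists y, 0 <= y /\ V y = t).
  { exists (X (sqrt t)); split.
    - rewrite <- X_0; destruct (Req_dec t 0) as [->|Ht0]; [rewrite sqrt_0; lra|].
      apply Rlt_le, X_lt, sqrt_lt_R0; lra.
    - unfold V; rewrite W_X, <- Rsqr_pow2; now apply Rsqr_sqrt. }
  destruct (epsilon_spec (inhabits 0) (fun y => 0 <= y /\ V y = t) Hex) as [Hy HVy].
  set (y := epsilon _ _) in *.
  assert (HWy : 0 <= W y)
    by (destruct Hy as [Hy| <-]; [apply Rlt_le; rewrite <- W_0; now apply W_lt | rewrite W_0; lra]).
  rewrite <- (X_W y); f_equal; unfold V in HVy; now rewrite <- HVy, sqrt_pow2.
Qed.

Lemma X_sqrt_pos th : 0 < th -> 0 < X (sqrt th).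
Proof. intros Hth; rewrite <- X_0; apply X_lt, sqrt_lt_R0, Hth. Qed.

Lemma W_lt_sqrt th y : - X (sqrt th) < y < X (sqrt th) -> - sqrt th < W y < sqrt th.
Proof.
  intros [Hl Hr]; rewrite <- X_opp in Hl.
  apply W_lt in Hl; apply W_lt in Hr; rewrite !W_X in *; lra.
Qed.

(* [G th phi] is the integral of [dX (sqrt th * sin psi)] over [psi] in [0, phi]: under the
   substitution [y = X (sqrt th * sin psi)] the integrand of [a] becomes [dX (...) / sqrt 2]. *)
Definition G (th phi : R) : R :=
  al * phi + be * th * (phi - sin phi * cos phi) / 2
  + th ^ 2 * (3 * (phi - sin phi * cos phi) / 8 - sin phi ^ 3 * cos phi / 4).

Lemma is_derive_G th phi :
  is_derive (G th) phi (al + be * th * sin phi ^ 2 + th ^ 2 * sin phi ^ 4).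
Proof.
  unfold G; auto_derive; [easy|].
  pose proof (sin2_cos2 phi) as Hsc; unfold Rsqr in Hsc.
  replace (cos phi * cos phi) with (1 - sin phi * sin phi) by lra; ring_simplify.
  replace (cos phi ^ 2) with (1 - sin phi ^ 2) by (simpl; lra); field.
Qed.

Lemma is_derive_W_div th y : 0 < th -> is_derive (fun z => W z / sqrt th) y (/ dX (W y) / sqrt th).
Proof.
  intros Hth; pose proof (sqrt_lt_R0 _ Hth); pose proof (dX_pos (W y)).
  replace (/ dX (W y) / sqrt th) with ((/ dX (W y) * sqrt th - W y * 0) / sqrt th ^ 2)
    by (field; lra).
  apply (is_derive_div W (fun _ => sqrt th)); [apply is_derive_W | auto_derive; [easy | ring] | lra].
Qed.

Definition abel_primitive (th y : R) : R := / sqrt 2 * G th (asin (W y / sqrt th)).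

Lemma is_derive_abel_primitive th y : 0 < th -> - X (sqrt th) < y < X (sqrt th) ->
  is_derive (abel_primitive th) y (1 / (sqrt 2 * sqrt (th - V y))).
Proof.
  intros Hth Hy; set (s0 := sqrt th); set (w := W y); set (t := w / s0).
  assert (Hs0 : 0 < s0) by now apply sqrt_lt_R0.
  assert (Hs0th : s0 ^ 2 = th) by (unfold s0; simpl; rewrite Rmult_1_r; now apply sqrt_sqrt, Rlt_le).
  assert (Hw : - s0 < w < s0) by exact (W_lt_sqrt th y Hy).
  assert (Ht : -1 < t < 1)
    by (unfold t, Rdiv; split; apply (Rmult_lt_reg_r s0); try lra;
        rewrite Rmult_assoc, Rinv_l; lra).
  assert (Hsqrt : sqrt (th - V y) = s0 * sqrt (1 - t ^ 2)).
  { unfold V; fold w; rewrite <- Hs0th.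
    replace (s0 ^ 2 - w ^ 2) with (s0 ^ 2 * (1 - t ^ 2)) by (unfold t; field; lra).
    rewrite sqrt_mult_alt, sqrt_pow2; lra || apply pow2_ge_0. }
  assert (H1t : 0 < sqrt (1 - t ^ 2)) by (apply sqrt_lt_R0; nra).
  pose proof (is_derive_W_div th y Hth) as Hdt.
  pose proof (is_derive_comp asin (fun z => W z / s0) y _ _ (is_derive_asin t Ht) Hdt) as Hasin.
  pose proof (is_derive_comp (G th) (fun z => asin (W z / s0)) y _ _
                (is_derive_G th (asin t)) Hasin) as HG.
  pose proof (is_derive_scal _ _ (/ sqrt 2) _ HG) as HF.
  unfold abel_primitive; fold s0; eapply is_derive_ext; [intros; reflexivity|].
  replace (1 / (sqrt 2 * sqrt (th - V y))) with
    (/ sqrt 2 * (/ dX w / s0 * / sqrt (1 - t ^ 2)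
      * (al + be * th * sin (asin t) ^ 2 + th ^ 2 * sin (asin t) ^ 4))).
  { exact HF. }
  rewrite sin_asin by lra; rewrite Hsqrt.
  replace (al + be * th * t ^ 2 + th ^ 2 * t ^ 4) with (dX w)
    by (unfold dX, t; rewrite <- Hs0th; field; lra).
  pose proof (dX_pos w); pose proof Rlt_sqrt2_0; field; repeat split; lra.
Qed.

Lemma abel_primitive_at_left th : 0 < th ->
  filterlim (abel_primitive th) (at_left (X (sqrt th))) (locally (/ sqrt 2 * G th (PI / 2))).
Proof.
  intros Hth; pose proof (sqrt_lt_R0 _ Hth) as Hs0.
  assert (Hlt1 : filterlim (fun y => W y / sqrt th) (at_left (X (sqrt th))) (at_left 1)).
  { intros P HP.
    assert (Hc : continuous (fun y => W y / sqrt th) (X (sqrt th)))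
      by (apply (ex_derive_continuous (fun y => W y / sqrt th)); eexists; now apply is_derive_W_div).
    unfold continuous in Hc; rewrite W_X, Rdiv_diag in Hc by lra.
    unfold filtermap, at_left, within.
    apply (filter_imp (fun y => W y / sqrt th < 1 -> P (W y / sqrt th))); [|exact (Hc _ HP)].
    intros y HPy Hy; apply HPy, (Rdiv_lt_1 _ _ Hs0).
    rewrite <- (W_X (sqrt th)); now apply W_lt. }
  apply (filterlim_comp _ _ _ (fun y => asin (W y / sqrt th)) (fun p => / sqrt 2 * G th p) _
           (locally (PI / 2))).
  - exact (filterlim_comp _ _ _ _ asin _ _ _ Hlt1 asin_at_left_1).
  - apply (ex_derive_continuous (fun p => / sqrt 2 * G th p)); eexists.
    apply (is_derive_scal (G th)), is_derive_G.
Qed.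

Definition a_closed (th : R) : R := PI / (2 * sqrt 2) * (al + be * th / 2 + 3 * th ^ 2 / 8).

Lemma is_RInt_gen_V th : 0 < th ->
  is_RInt_gen (fun y => 1 / (sqrt 2 * sqrt (th - V y))) (at_point 0) (at_left (X (sqrt th)))
    (a_closed th).
Proof.
  intros Hth; pose proof (X_sqrt_pos th Hth).
  replace (a_closed th) with (/ sqrt 2 * G th (PI / 2) - abel_primitive th 0).
  2:{ unfold abel_primitive, a_closed, G; rewrite W_0, Rdiv_0_l, asin_0, sin_0, sin_PI2, cos_PI2.
      pose proof Rlt_sqrt2_0; field; lra. }
  apply (is_RInt_gen_at_left_of_derive _ _ (- X (sqrt th))); [lra | | |now apply abel_primitive_at_left].
  - intros y Hy; now apply is_derive_abel_primitive.
  - intros y Hy; apply continuous_inv_sqrt_diff.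
    + apply (ex_derive_continuous V); eexists; apply is_derive_V.
    + pose proof (W_lt_sqrt th y Hy); unfold V.
      rewrite <- (sqrt_sqrt th) at 1 by lra; pose proof (sqrt_lt_R0 _ Hth); nra.
Qed.

End Quintic.

Lemma sqrt_Derive_n_V_ratio al1 be1 al2 be2 :
  0 < al1 -> be1 ^ 2 < 4 * al1 -> 0 < al2 -> be2 ^ 2 < 4 * al2 ->
  sqrt (Derive_n (V al2 be2) 2 0 / Derive_n (V al1 be1) 2 0) = al1 / al2.
Proof.
  intros Hal1 Hdisc1 Hal2 Hdisc2; rewrite !Derive_n_V_2_0 by easy.
  replace (2 / al2 ^ 2 / (2 / al1 ^ 2)) with ((al1 / al2) ^ 2) by (field; lra).
  apply sqrt_pow2, Rlt_le, Rdiv_lt_0_compat; lra.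
Qed.

Lemma no_nat_sqrt2 D N : (0 < D)%nat -> (N * N <> 2 * (D * D))%nat.
Proof.
  revert N; induction D as [D IH] using (well_founded_induction Wf_nat.lt_wf); intros N HD HN.
  destruct (Nat.Even_or_Odd N) as [[M ->]|[M ->]]; [|nia].
  assert (HM : (0 < M < D)%nat) by (destruct M; nia).
  apply (IH M ltac:(lia) D ltac:(lia)); nia.
Qed.

Lemma sqrt2_irrational : irrational (sqrt 2).
Proof.
  intros [[n d] Hq]; unfold Q2R in Hq; simpl in Hq.
  assert (Hd : 0 < IZR (Z.pos d)) by (apply IZR_lt; lia).
  assert (Hn : IZR n = sqrt 2 * IZR (Z.pos d)) by (rewrite <- Hq; field; lra).
  assert (Hsq : (n * n = 2 * (Z.pos d * Z.pos d))%Z).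
  { apply eq_IZR; rewrite !mult_IZR, Hn.
    replace (sqrt 2 * IZR (Z.pos d) * (sqrt 2 * IZR (Z.pos d)))
      with (sqrt 2 * sqrt 2 * (IZR (Z.pos d) * IZR (Z.pos d))) by ring.
    rewrite sqrt_sqrt by lra; reflexivity. }
  apply (no_nat_sqrt2 (Pos.to_nat d) (Z.abs_nat n)); [lia|].
  apply (f_equal Z.abs_nat) in Hsq; rewrite !Zabs2Nat.inj_mul in Hsq; rewrite Hsq; simpl; lia.
Qed.

Lemma irrational_two_minus x : irrational x -> irrational (2 - x).
Proof.
  intros Hx [q Hq]; apply Hx; exists (2 - q)%Q.
  rewrite Q2R_minus, Hq; unfold Q2R; simpl; field.
Qed.

Theorem mainTheorem19 : forall E : R, 0 < E ->
  exists V1 V2 : R -> R,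
    UM V1 /\ UM V2 /\
    even_fun V1 /\ even_fun V2 /\
    ~ quadratic V1 /\ ~ quadratic V2 /\
    deg_at0 V1 2 /\ deg_at0 V2 2 /\
    (forall theta : R, 0 < theta < E ->
       exists l : R, is_a V1 theta l /\ is_b V2 E theta l) /\
    irrational (sqrt (Derive_n V2 2 0 / Derive_n V1 2 0)).
Proof.
  intros E HE.
  set (k := 3 * sqrt 2 / 8); set (al1 := k * E ^ 2).
  set (al2 := al1 + 3 * E ^ 2 / 8); set (be2 := - (3 * E / 2)).
  assert (Hsqrt2 : 1 < sqrt 2) by (rewrite <- sqrt_1; apply sqrt_lt_1; lra).
  assert (HE2 : 0 < E ^ 2) by now apply pow_lt.
  assert (Hal1 : 0 < al1) by (unfold al1, k; nra).
  assert (Hal2 : 0 < al2) by (unfold al2; nra).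
  assert (Hdisc1 : 0 ^ 2 < 4 * al1) by lra.
  assert (Hdisc2 : be2 ^ 2 < 4 * al2) by (unfold al2, al1, be2, k; nra).
  exists (V al1 0), (V al2 be2).
  refine (conj (V_UM _ _ Hal1 Hdisc1) (conj (V_UM _ _ Hal2 Hdisc2)
    (conj (V_even _ _ Hal1 Hdisc1) (conj (V_even _ _ Hal2 Hdisc2)
    (conj (V_not_quadratic _ _ Hal1 Hdisc1) (conj (V_not_quadratic _ _ Hal2 Hdisc2)
    (conj (V_deg_2 _ _ Hal1 Hdisc1) (conj (V_deg_2 _ _ Hal2 Hdisc2) (conj _ _))))))))).
  - intros th [Hth HthE]; exists (a_closed al1 0 th); split.
    + unfold is_a; rewrite Vinv_V by (easy || lra); now apply is_RInt_gen_V.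
    + unfold is_b; rewrite Vinv_V by (easy || lra).
      replace (a_closed al1 0 th) with (a_closed al2 be2 (E - th))
        by (unfold a_closed, al2, be2; pose proof Rlt_sqrt2_0; field; lra).
      apply is_RInt_gen_V; easy || lra.
  - rewrite (sqrt_Derive_n_V_ratio _ _ _ _ Hal1 Hdisc1 Hal2 Hdisc2).
    replace (al1 / al2) with (2 - sqrt 2); [apply irrational_two_minus, sqrt2_irrational|].
    unfold al2, al1, k; field_simplify_eq; [|nra].
    pose proof (sqrt_sqrt 2 ltac:(lra)); nra.
Qed.
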